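(* Let $q\ge2$ be a fixed even integer. For every $n$ there exists a code $\mathcal{C}\subseteq\Sigma_q^n$ capable of correcting a reverse-complement duplication of arbitrary length (i.e. $RC_k^1(\boldsymbol{x})\cap RC_k^1(\boldsymbol{z})=\varnothing$ for all distinct $\boldsymbol{x},\boldsymbol{z}\in\mathcal{C}$ and all $k\ge1$) with redundancy $n-\log_q|\mathcal{C}|\le 2\log_q n+\log_q\log_q n+O(1)$; in particular the asymptotic rate $\log_q|\mathcal{C}|/n$ tends to $1$.
   Context: $\Sigma_q=\{0,\dots,q-1\}$. A complement operation is a fixed bijection $a\mapsto\overline{a}$ on $\Sigma_q$ with $\overline{a}\ne a$, $\overline{\overline{a}}=a$; $\boldsymbol{v}^{RC}=\overline{v_k}\cdots\overline{v_1}$ for $\boldsymbol{v}=v_1\cdots v_k$. For $\boldsymbol{x}=\boldsymbol{u}\boldsymbol{v}\boldsymbol{w}\in\Sigma_q^n$ with $|\boldsymbol{u}|=i-1$, $|\boldsymbol{v}|=k$, $RC_{k,i}(\boldsymbol{x})=\boldsymbol{u}\boldsymbol{v}\boldsymbol{v}^{RC}\boldsymbol{w}$, and $RC_k^1(\boldsymbol{x})=\{RC_{k,i}(\boldsymbol{x}):i\in[1,n-k+1]\}$ (empty if $k>n$). The $O(1)$ term depends only on $q$. *)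

From Stdlib Require Import Reals.
From mathcomp Require Import all_boot.
Set Implicit Arguments. Unset Strict Implicit. Unset Printing Implicit Defensive.

Definition is_complement (q : nat) (comp : 'I_q -> 'I_q) : Prop :=
  (forall a, comp a != a) /\ (forall a, comp (comp a) = a).

Definition revcomp (q : nat) (comp : 'I_q -> 'I_q) (v : seq 'I_q) : seq 'I_q :=
  rev (map comp v).

(* RC_{k,i}(x) with 0-based start position j = i - 1:
   x = u v w, |u| = j, |v| = k  |->  u v v^{RC} w. *)
Definition rc_dup (q : nat) (comp : 'I_q -> 'I_q) (k j : nat) (x : seq 'I_q)
  : seq 'I_q :=
  let u := take j x in
  let v := take k (drop j x) in
  let w := drop (j + k) x in
  u ++ v ++ revcomp comp v ++ w.

Definition in_RC1 (q : nat) (comp : 'I_q -> 'I_q) (k : nat) (x y : seq 'I_q)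
  : Prop :=
  exists j : nat, j + k <= size x /\ y = rc_dup comp k j x.

Definition rc_correcting (q n : nat) (comp : 'I_q -> 'I_q)
  (C : {set n.-tuple 'I_q}) : Prop :=
  forall x z : n.-tuple 'I_q, x \in C -> z \in C -> x != z ->
  forall k : nat, 1 <= k ->
  forall y : seq 'I_q, ~ (in_RC1 comp k x y /\ in_RC1 comp k z y).

Definition logq (q : nat) (x : R) : R := Rdiv (ln x) (ln (INR q)).

(* Counting, in the style of Gilbert-Varshamov.  If RC_{k,j}(x) = RC_{k,j'}(z) for
   x <> z, then j <> j' and the common word y contains a reverse-complement square
   v v^RC centred at j + k and another one centred at j' + k.  A word of length n + k
   with two such centres is determined by what is left after cutting out the k letters
   to the right of each centre, so for fixed (k, j, j') at most
   q^(n-k) + q^(n-|j-j'|) words x can be involved.  Summing these geometric terms over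
   (k, j, j') bounds the total degree of the confusion graph on Sigma_q^n by
   3 (n+1)^2 q^n.  Hence at least half of the words have degree at most 6 (n+1)^2, and
   a greedy independent set among them is a code of size at least q^n / (50 n^2),
   i.e. of redundancy at most 2 log_q n + log_q 50. *)

From Stdlib Require Import Reals Lia Lra.
From mathcomp Require Import all_boot zify.
From mathcomp Require ssrint.
Import ssrint.IntDist.
Set Implicit Arguments. Unset Strict Implicit. Unset Printing Implicit Defensive.

Section ReverseComplementPalindromes.
Variables (q : nat) (comp : 'I_q -> 'I_q).
Implicit Types (x y : seq 'I_q).

(* y = u v v^RC w with |u v| = c and |v| = k, provided k <= c and c + k <= size y. *)
Definition rc_pal y c k : bool :=
  take k (drop c y) == revcomp comp (take k (drop (c - k) y)).

Definition del_block c k y : seq 'I_q := take c y ++ drop (c + k) y.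

(* If the blocks [a, a + k) and [b, b + k) overlap, all of [a, b + k) is removed. *)
Definition erase_blocks a b k y : seq 'I_q :=
  take a y ++ drop (a + k) (take b y) ++ drop (b + k) y.

Lemma size_revcomp v : size (revcomp comp v) = size v.
Proof. by rewrite size_rev size_map. Qed.

Lemma rc_dupE k j x :
  rc_dup comp k j x = take (j + k) x ++ revcomp comp (take k (drop j x)) ++ drop (j + k) x.
Proof. by rewrite /rc_dup catA -takeD. Qed.

Lemma size_rc_dup k j x : j + k <= size x -> size (rc_dup comp k j x) = size x + k.
Proof.
move=> le_jk; rewrite rc_dupE !size_cat size_revcomp size_drop !size_takel ?size_drop; lia.
Qed.

Lemma rc_dupK k j x : j + k <= size x -> del_block (j + k) k (rc_dup comp k j x) = x.
Proof.
move=> le_jk; rewrite /del_block rc_dupE.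
have size_u : size (take (j + k) x) = j + k by rewrite size_takel.
have size_v : size (revcomp comp (take k (drop j x))) = k.
  by rewrite size_revcomp size_takel // size_drop; lia.
rewrite take_size_cat // drop_cat size_u ltnNge leq_addr /= addKn.
by rewrite drop_size_cat // cat_take_drop.
Qed.

Lemma rc_pal_rc_dup k j x : j + k <= size x -> rc_pal (rc_dup comp k j x) (j + k) k.
Proof.
move=> le_jk; rewrite /rc_pal /rc_dup addnK.
have size_u : size (take j x) = j by rewrite size_takel //; lia.
have size_v : size (take k (drop j x)) = k by rewrite size_takel // size_drop; lia.
rewrite drop_cat size_u ltnNge leq_addr /= addKn !drop_size_cat //.
by rewrite !take_size_cat ?size_revcomp.
Qed.

Lemma nth_rc_pal a0 y c k i : rc_pal y c k -> k <= c -> c + k <= size y -> i < k ->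
  nth a0 y (c + i) = comp (nth a0 y (c - i.+1)).
Proof.
move=> /eqP pal le_kc le_ck lt_ik.
have size_v : size (take k (drop (c - k) y)) = k.
  by rewrite size_takel // size_drop; lia.
rewrite -nth_drop -(nth_take a0 lt_ik) pal nth_rev size_map size_v //.
rewrite (nth_map a0) ?size_v; last lia.
by rewrite nth_take ?nth_drop; [congr (comp (nth _ _ _)) |]; lia.
Qed.

Lemma size_erase_blocks a b k y : a <= b -> b + k <= size y ->
  size (erase_blocks a b k y) = size y - k - minn k (b - a).
Proof.
move=> le_ab le_bk.
by rewrite !size_cat !size_drop !size_takel //; lia.
Qed.

Lemma erase_blocks_inj a b k y y' : k <= a < b -> b + k <= size y -> size y = size y' ->
  rc_pal y a k -> rc_pal y b k -> rc_pal y' a k -> rc_pal y' b k ->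
  erase_blocks a b k y = erase_blocks a b k y' -> y = y'.
Proof.
move=> /andP [le_ka lt_ab] le_bk eq_size pa pb pa' pb' /eqP.
rewrite /erase_blocks eqseq_cat; last by rewrite !size_take eq_size.
case/andP => /eqP eq_pre; rewrite eqseq_cat; last by rewrite !size_drop !size_take eq_size.
case/andP => /eqP eq_mid /eqP eq_suf.
have a0 : 'I_q.
  have : 0 < size y by lia.
  by case: (y).
apply: (eq_from_nth (x0 := a0)) => // + _; elim/ltn_ind => p IH.
case: (ltnP p a) => [lt_pa|le_ap]; first by rewrite -(nth_take a0 lt_pa) eq_pre nth_take.
case: (ltnP p (a + k)) => [lt_pak|le_akp].
  rewrite -(subnKC le_ap) (nth_rc_pal _ pa) ?(nth_rc_pal _ pa') ?IH // -?eq_size; lia.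
case: (ltnP p b) => [lt_pb|le_bp].
  have nth_mid z : nth a0 z p = nth a0 (drop (a + k) (take b z)) (p - (a + k)).
    by rewrite nth_drop nth_take subnKC.
  by rewrite !nth_mid eq_mid.
case: (ltnP p (b + k)) => [lt_pbk|le_bkp].
  rewrite -(subnKC le_bp) (nth_rc_pal _ pb) ?(nth_rc_pal _ pb') ?IH // -?eq_size; lia.
by rewrite -(subnKC le_bkp) -!nth_drop eq_suf.
Qed.

Lemma card_rc_dup_pal n k j j' : 0 < q -> j + k <= n -> j' + k <= n -> j != j' ->
  #|[set x : n.-tuple 'I_q | rc_pal (rc_dup comp k j x) (j' + k) k]|
    <= q ^ (n - minn k `|j - j'|).
Proof.
move=> q_gt0 le_jk le_j'k neq_jj'.
set a := minn j j' + k; set b := maxn j j' + k; set L := n - minn k `|j - j'|.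
have size_erase (x : n.-tuple 'I_q) : size (erase_blocks a b k (rc_dup comp k j x)) = L.
  rewrite size_erase_blocks ?size_rc_dup ?size_tuple /a /b /L; lia.
pose f (x : n.-tuple 'I_q) : L.-tuple 'I_q :=
  insubd (nseq_tuple L (Ordinal q_gt0)) (erase_blocks a b k (rc_dup comp k j x)).
rewrite -(card_in_imset (f := f)) => [|x x'].
  by apply: leq_trans (max_card _) _; rewrite card_tuple card_ord.
rewrite !inE => pal_x pal_x' /(congr1 val); rewrite !val_insubd !size_erase eqxx.
have size_x : j + k <= size x by rewrite size_tuple.
have size_x' : j + k <= size x' by rewrite size_tuple.
have pal2 (y : seq 'I_q) : rc_pal y (j + k) k -> rc_pal y (j' + k) k ->
    rc_pal y a k /\ rc_pal y b k.
  by rewrite /a /b; case: (leqP j j') => _.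
have [pa pb] := pal2 _ (rc_pal_rc_dup size_x) pal_x.
have [pa' pb'] := pal2 _ (rc_pal_rc_dup size_x') pal_x'.
move=> eq_erase; apply: val_inj => /=.
rewrite -(rc_dupK size_x) -(rc_dupK size_x') (erase_blocks_inj _ _ _ pa pb pa' pb' eq_erase) //.
- by rewrite /a /b; lia.
- by rewrite size_rc_dup // size_tuple /b; lia.
- by rewrite !size_rc_dup // !size_tuple.
Qed.

End ReverseComplementPalindromes.

Section GeometricSums.
Variable q : nat.
Hypothesis q_gt1 : 1 < q.

Lemma sum_expn_lt m : \sum_(i < m) q ^ i < q ^ m.
Proof.
have q_gt0 : 0 < q ^ m by rewrite expn_gt0 ltnW.
rewrite -(prednK q_gt0) ltnS predn_exp.
by rewrite leq_pmull //; lia.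
Qed.

Lemma sum_expn_dist_below n j : j <= n ->
  \sum_(i < n.+1 | i < j) q ^ (n - (j - i)) < q ^ n.
Proof.
move=> le_jn; rewrite -(big_ord_widen _ (fun i => q ^ (n - (j - i)))); last exact: leqW.
rewrite (eq_bigr (fun i : 'I_j => q ^ (n - j) * q ^ i)) => [|i _]; last first.
  by rewrite -expnD; congr (_ ^ _); have := ltn_ord i; lia.
have -> : q ^ n = q ^ (n - j) * q ^ j by rewrite -expnD subnK.
by rewrite -big_distrr ltn_pmul2l ?sum_expn_lt // expn_gt0 ltnW.
Qed.

Lemma sum_expn_dist n (j : 'I_n.+1) :
  \sum_(i < n.+1 | i != j) q ^ (n - `|j - i|) <= 2 * q ^ n.
Proof.
rewrite (bigID (fun i : 'I_n.+1 => i < j)) /= mul2n -addnn.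
apply: leq_add; apply: ltnW.
  rewrite (eq_big (fun i : 'I_n.+1 => i < j) (fun i => q ^ (n - (j - i)))).
  - by apply: sum_expn_dist_below; rewrite -ltnS.
  - by move=> i; rewrite andb_idl // neq_ltn => ->.
  - by move=> i /andP [_ lt_ij]; congr (_ ^ (_ - _)); lia.
rewrite (reindex_inj rev_ord_inj) /=.
rewrite (eq_big (fun i : 'I_n.+1 => i < n - j) (fun i => q ^ (n - ((n - j) - i)))).
- exact: sum_expn_dist_below (leq_subr _ _).
- by move=> i; rewrite -val_eqE /=; have := ltn_ord j; have := ltn_ord i; lia.
- move=> i /andP [_ le_ji]; congr (_ ^ (_ - _)).
  by move: le_ji; have := ltn_ord j; have := ltn_ord i; lia.
Qed.

Lemma sum_expn_pos n : \sum_(k < n.+1 | 0 < k) q ^ (n - k) < q ^ n.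
Proof.
rewrite (reindex_inj rev_ord_inj) /=.
rewrite (eq_big (fun i : 'I_n.+1 => i < n) (fun i => q ^ (n - (n - i)))).
- exact: sum_expn_dist_below.
- by move=> i; rewrite subSS subn_gt0.
- by move=> i _; rewrite subSS.
Qed.

End GeometricSums.

Lemma indep_subset_card (T : finType) (r : rel T) (D : nat) (S : {set T}) :
  symmetric r -> irreflexive r -> {in S, forall x, #|[set y in S | r x y]| <= D} ->
  exists I : {set T}, [/\ I \subset S, {in I &, forall x y, ~~ r x y} & #|S| <= #|I| * D.+1].
Proof.
move=> r_sym r_irr; have [m] := ubnP #|S|; elim: m S => // m IH S lt_Sm degS.
have [->|[v vS]] := set_0Vmem S; first by exists set0; split=> [|x|]; rewrite ?sub0set ?cards0 ?inE.
set N := v |: [set y in S | r v y].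
have vN : v \in N by rewrite setU11.
have [|y|I [subI indI cardI]] := IH (S :\: N).
- have : 0 < #|S :&: N| by apply/card_gt0P; exists v; rewrite inE vS vN.
  by have := cardsID N S; lia.
- rewrite !inE => /andP [_ yS]; apply: leq_trans (degS y yS).
  by apply/subset_leq_card/subsetP => z; rewrite !inE => /andP [/andP [_ ->] ->].
have vI : v \notin I by apply: contraL vN => /(subsetP subI); rewrite inE => /andP [].
exists (v |: I); split.
- by rewrite subUset sub1set vS (subset_trans subI) ?subsetDl.
- have indv y : y \in I -> ~~ r v y.
    move=> /(subsetP subI) /setDP [yS]; apply: contra => rvy.
    by rewrite !inE yS rvy orbT.
  move=> x y; rewrite !inE => /predU1P [-> | xI] /predU1P [-> | yI].
  + by rewrite r_irr.
  + exact: indv.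
  + by rewrite r_sym indv.
  + exact: indI.
- rewrite cardsU1 vI mulSn -(cardsID N S) leq_add //.
  apply: leq_trans (subset_leq_card (subsetIr S N)) _.
  by rewrite cardsU1 !inE r_irr andbF add1n ltnS degS.
Qed.

Lemma card_large_le_sum (T : finType) (f : T -> nat) (D : nat) :
  #|[set x | D < f x]| * D.+1 <= \sum_x f x.
Proof.
rewrite -sum_nat_cond_const [leqRHS](bigID (fun x => D < f x)) /=.
by apply: leq_trans (leq_addr _ _); apply: leq_sum.
Qed.

Section ConfusionGraph.
Variables (q n : nat) (comp : 'I_q -> 'I_q).
Hypothesis q_gt1 : 1 < q.

Definition rc_confusable (x z : n.-tuple 'I_q) : bool :=
  (x != z) && [exists k : 'I_n.+1, exists j : 'I_n.+1, exists j' : 'I_n.+1,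
    [&& 0 < k, j + k <= n, j' + k <= n & rc_dup comp k j x == rc_dup comp k j' z]].

Lemma rc_confusable_sym : symmetric rc_confusable.
Proof.
suff imp x z : rc_confusable x z -> rc_confusable z x by move=> x z; apply/idP/idP; apply: imp.
case/andP => neq_xz /existsP [k /existsP [j /existsP [j' /and4P [k_gt0 le_jk le_j'k /eqP eq_dup]]]].
rewrite /rc_confusable eq_sym neq_xz; apply/existsP; exists k; apply/existsP; exists j'.
by apply/existsP; exists j; rewrite k_gt0 le_jk le_j'k eq_dup eqxx.
Qed.

Lemma rc_confusable_irr : irreflexive rc_confusable.
Proof. by move=> x; rewrite /rc_confusable eqxx. Qed.

Lemma rc_correcting_indep (C : {set n.-tuple 'I_q}) :
  {in C &, forall x z, ~~ rc_confusable x z} -> rc_correcting comp C.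
Proof.
move=> indC x z xC zC neq_xz k k_gt0 y [[j [le_jk ->]] [j' [le_j'k eq_dup]]].
move: le_jk le_j'k; rewrite !size_tuple => le_jk le_j'k.
have /negP := indC x z xC zC; apply; rewrite /rc_confusable neq_xz /=.
have [lt_k lt_j lt_j'] : [/\ k < n.+1, j < n.+1 & j' < n.+1] by split; lia.
apply/existsP; exists (Ordinal lt_k); apply/existsP; exists (Ordinal lt_j).
by apply/existsP; exists (Ordinal lt_j'); rewrite /= k_gt0 le_jk le_j'k eq_dup eqxx.
Qed.

Definition rc_witness (x : n.-tuple 'I_q) (t : 'I_n.+1 * 'I_n.+1 * 'I_n.+1) : bool :=
  let: (k, j, j') := t in
  [&& 0 < k, j + k <= n, j' + k <= n, j != j' :> nat &
      rc_pal comp (rc_dup comp k j x) (j' + k) k].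

Lemma card_rc_confusable_le x :
  #|[set z | rc_confusable x z]| <= #|[set t | rc_witness x t]|.
Proof.
pose g (t : 'I_n.+1 * 'I_n.+1 * 'I_n.+1) : n.-tuple 'I_q :=
  let: (k, j, j') := t in insubd x (del_block (j' + k) k (rc_dup comp k j x)).
apply: leq_trans (leq_imset_card g _); apply/subset_leq_card/subsetP => z.
rewrite inE => /andP [neq_xz].
case/existsP => k /existsP [j /existsP [j' /and4P [k_gt0 le_jk le_j'k /eqP eq_dup]]].
have size_x : j + k <= size x by rewrite size_tuple.
have size_z : j' + k <= size z by rewrite size_tuple.
apply/imsetP; exists (k, j, j'); last first.
  by apply: val_inj; rewrite /= val_insubd eq_dup rc_dupK // size_tuple eqxx.
rewrite inE /= k_gt0 le_jk le_j'k eq_dup rc_pal_rc_dup // andbT.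
apply: contraNN neq_xz => /eqP eq_jj'; apply/eqP/val_inj => /=.
by rewrite -(rc_dupK comp size_x) -(rc_dupK comp size_z) eq_dup eq_jj'.
Qed.

Lemma card_rc_witness_le k j j' :
  #|[set x | rc_witness x (k, j, j')]|
    <= (if 0 < k then q ^ (n - k) else 0) + (if j != j' :> nat then q ^ (n - `|j - j'|) else 0).
Proof.
have [/and4P [k_gt0 le_jk le_j'k neq_jj'] | ] :=
  boolP [&& 0 < (k : nat), j + k <= n, j' + k <= n & j != j' :> nat].
  rewrite k_gt0 neq_jj'.
  have sub_pal : [set x | rc_witness x (k, j, j')]
      \subset [set x : n.-tuple 'I_q | rc_pal comp (rc_dup comp k j x) (j' + k) k].
    by apply/subsetP => x; rewrite !inE => /and5P [].
  have := card_rc_dup_pal comp (ltnW q_gt1) le_jk le_j'k neq_jj'.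
  move/(leq_trans (subset_leq_card sub_pal))/leq_trans; apply.
  by rewrite /minn; case: ifP => _; rewrite ?leq_addr ?leq_addl.
move=> not_param; rewrite (_ : [set x | _] = set0) ?cards0 //.
by apply/setP => x; rewrite !inE; apply: contraNF not_param => /and5P [-> -> -> -> _].
Qed.

Lemma sum_card_rc_witness :
  \sum_x #|[set t | rc_witness x t]| <= 3 * n.+1 ^ 2 * q ^ n.
Proof.
under eq_bigr do rewrite -sum1dep_card.
rewrite (exchange_big_dep predT) //=.
under eq_bigr do rewrite sum1dep_card.
pose B (k j j' : 'I_n.+1) :=
  (if 0 < k then q ^ (n - k) else 0) + (if j != j' :> nat then q ^ (n - `|j - j'|) else 0).
apply: (@leq_trans (\sum_(t : 'I_n.+1 * 'I_n.+1 * 'I_n.+1) B t.1.1 t.1.2 t.2)).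
  by apply: leq_sum => [[[k j] j']] _; apply: card_rc_witness_le.
rewrite -(pair_bigA _ (fun kj j' => B kj.1 kj.2 j')) /=.
rewrite -(pair_bigA _ (fun k j => \sum_j' B k j j')) /=.
have sum_j' k j : \sum_j' B k j j' <= n.+1 * (if 0 < k then q ^ (n - k) else 0) + 2 * q ^ n.
  rewrite big_split sum_nat_const card_ord leq_add2l /= -big_mkcond.
  by rewrite (eq_bigl (fun i => i != j)) ?sum_expn_dist // => i; rewrite val_eqE eq_sym.
apply: (@leq_trans
  (\sum_(k < n.+1) \sum_(j < n.+1) (n.+1 * (if 0 < k then q ^ (n - k) else 0) + 2 * q ^ n))).
  by apply: leq_sum => k _; apply: leq_sum => j _; apply: sum_j'.
under eq_bigr do rewrite sum_nat_const card_ord.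
rewrite -big_distrr big_split -big_distrr sum_nat_const card_ord /= -big_mkcond expnS expn1.
by have := sum_expn_pos q_gt1 n; set X := \sum_(k | _) _; nia.
Qed.

Lemma exists_rc_code : 0 < n ->
  exists C : {set n.-tuple 'I_q}, rc_correcting comp C /\ q ^ n <= 50 * n ^ 2 * #|C|.
Proof.
move=> n_gt0; set D := 6 * n.+1 ^ 2.
set B := [set x | D < #|[set t | rc_witness x t]|].
have few_bad : #|B| * D.+1 <= 3 * n.+1 ^ 2 * q ^ n.
  exact: leq_trans (card_large_le_sum _ D) sum_card_rc_witness.
have many_good : q ^ n <= 2 * #|~: B|.
  move: few_bad; have := cardsC B; rewrite card_tuple card_ord /D => <-.
  by move: #|B| #|~: B| (n.+1 ^ 2) => a b N; nia.
have degS : {in ~: B, forall x, #|[set z in ~: B | rc_confusable x z]| <= D}.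
  move=> x; rewrite !inE -leqNgt => le_witness_D.
  apply: leq_trans le_witness_D; apply: leq_trans (card_rc_confusable_le x).
  by apply/subset_leq_card/subsetP => z; rewrite !inE => /andP [].
have [C [_ indC cardC]] := indep_subset_card rc_confusable_sym rc_confusable_irr degS.
exists C; split; first exact: rc_correcting_indep.
have le_D : 2 * D.+1 <= 50 * n ^ 2 by rewrite /D; nia.
apply: leq_trans many_good (leq_trans (leq_mul (leqnn 2) cardC) _).
by rewrite mulnCA mulnC leq_mul2r le_D orbT.
Qed.

End ConfusionGraph.

Section LogBase.
Local Open Scope R_scope.
Variable q : nat.
Hypothesis q_gt1 : (1 < q)%N.

Lemma ln_q_gt0 : 0 < ln (INR q).
Proof. by rewrite -ln_1; apply: ln_increasing; [lra | apply: lt_1_INR; apply/ltP]. Qed.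

Lemma logq_le x y : 0 < x -> x <= y -> logq q x <= logq q y.
Proof.
move=> x_gt0 /Rle_lt_or_eq_dec [lt_xy | <-]; last exact: Rle_refl.
apply: Rmult_le_compat_r; first exact/Rlt_le/Rinv_0_lt_compat/ln_q_gt0.
exact/Rlt_le/ln_increasing.
Qed.

Lemma logq_mul x y : 0 < x -> 0 < y -> logq q (x * y) = logq q x + logq q y.
Proof. by move=> x_gt0 y_gt0; rewrite /logq ln_mult // /Rdiv Rmult_plus_distr_r. Qed.

Lemma logq_expn m : logq q (INR (q ^ m)) = INR m.
Proof.
have -> : INR (q ^ m) = INR q ^ m by elim: m => [|m IH] //; rewrite expnS mult_INR IH.
apply: Rlog_pow; last by apply: lt_0_INR; apply/ltP; exact: ltnW.
by apply: not_eq_sym; apply: Rlt_not_eq; apply: lt_1_INR; apply/ltP.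
Qed.

Lemma logq_gt0 x : 1 < x -> 0 < logq q x.
Proof.
move=> x_gt1; apply: Rmult_lt_0_compat; last exact/Rinv_0_lt_compat/ln_q_gt0.
by rewrite -ln_1; apply: ln_increasing; lra.
Qed.

Lemma logq_card_bound n K : (q ^ n <= 50 * n ^ 2 * K)%N -> (0 < n)%N ->
  INR n <= logq q 50 + 2 * logq q (INR n) + logq q (INR K).
Proof.
move=> /leP /le_INR; rewrite !mult_INR => le_qn n_gt0.
have qn_gt0 : 0 < INR (q ^ n) by apply/lt_0_INR/ltP; rewrite expn_gt0 ltnW.
have n_gt0R : 0 < INR n by apply/lt_0_INR/ltP.
have K_gt0R : 0 < INR K.
  case: K le_qn => [|K] le_qn; last exact/lt_0_INR/ltP.
  by move: le_qn; rewrite Rmult_0_r; lra.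
have nn_gt0 : 0 < INR n * INR n by apply: Rmult_lt_0_compat.
have c50 : INR 50 = 50 by rewrite INR_IZR_INZ.
have := logq_le qn_gt0 le_qn; rewrite logq_expn c50.
by rewrite logq_mul ?(logq_mul _ nn_gt0) ?(logq_mul n_gt0R n_gt0R) //; lra.
Qed.

End LogBase.

Theorem theorem3 (q : nat) (Hq2 : 2 <= q) (Hqeven : ~~ odd q) :
  exists c : R,
  forall comp : 'I_q -> 'I_q, is_complement comp ->
  forall n : nat, 2 <= n ->
  exists C : {set n.-tuple 'I_q},
    rc_correcting comp C /\
    Rle (Rminus (INR n) (logq q (INR #|C|)))
        (Rplus (Rplus (Rmult 2 (logq q (INR n))) (logq q (logq q (INR n)))) c).
Proof.
exists (Rminus (logq q 50) (logq q (logq q 2))) => comp _ n n_ge2.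
have [C [corrC cardC]] := exists_rc_code comp Hq2 (ltnW n_ge2).
exists C; split => //.
have le_logn := logq_card_bound Hq2 cardC (ltnW n_ge2).
have n_ge2R : Rle 2 (INR n) by apply: (le_INR 2); apply/leP.
have log2_gt0 : Rlt 0 (logq q 2) by apply: (logq_gt0 Hq2); lra.
have : Rle (logq q (logq q 2)) (logq q (logq q (INR n))).
  by apply: (logq_le Hq2 log2_gt0); apply: (logq_le Hq2) n_ge2R; lra.
lra.
Qed.
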